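(* Let $\mathcal{C}$ be a DC circuit whose elements are ideal DC voltage sources, resistors (with positive finite resistances), capacitors and/or inductors, with arbitrary topology, and suppose $\mathcal{C}$ is in a DC steady state. Let $\mathcal{C}^+$ be the circuit obtained from $\mathcal{C}$ by adding one new link consisting of a resistor with positive resistance between two nodes of $\mathcal{C}$, and suppose $\mathcal{C}^+$ is also in a DC steady state. Let $\mathrm{Loss}'$ and $\mathrm{Loss}$ denote the total steady-state resistive losses $\sum I^2R$ (sum over all resistors) of $\mathcal{C}$ and $\mathcal{C}^+$ respectively. Then $\mathrm{Loss}\ge\mathrm{Loss}'$; that is, the steady-state Loss Cost of the Link $\mathrm{LCL}=\mathrm{Loss}/\mathrm{Loss}'$ satisfies $\mathrm{LCL}\ge1$.
   Context: A circuit is modeled as a finite graph whose nodes are points where two or more circuit elements meet and whose links each carry one element. In a DC steady state, node potentials and branch currents satisfy Kirchhoff's current and voltage laws, each resistor obeys Ohm's law $V=IR$, each voltage source imposes a fixed potential difference across its link, each capacitor carries zero current (acts as an open circuit), and each inductor has zero voltage drop (acts as a short circuit). The Loss Cost of the Link (LCL) is the ratio of the total network resistive loss after adding a link to the total network resistive loss before adding it. *)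

From HB Require Import structures.
From mathcomp Require Import all_boot all_order all_algebra.
From mathcomp Require Import reals.
Set Implicit Arguments. Unset Strict Implicit. Unset Printing Implicit Defensive.
Import Order.TTheory GRing.Theory Num.Theory.
Local Open Scope ring_scope.

Inductive element (R : Type) :=
| VSource of R      (* ideal DC voltage source: potential(src) - potential(dst) = E *)
| Resistor of R
| Capacitor
| Inductor.

Arguments Capacitor {R}.
Arguments Inductor {R}.

(* A circuit: a finite multigraph with node type V and link type L; every link
   has two endpoints (an orientation, used only to fix sign conventions) and
   carries one element. *)
Record circuit (R : Type) (V L : finType) := Circuit {
  src : L -> V;
  dst : L -> V;
  elem : L -> element R
}.

Definition pos_resistances (R : realType) (V L : finType) (c : circuit R V L) :=
  forall l r, elem c l = Resistor r -> 0 < r.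

(* KVL is automatic
   since voltages are differences of node potentials. *)
Definition steady_state (R : realType) (V L : finType) (c : circuit R V L)
    (phi : V -> R) (I : L -> R) : Prop :=
  (forall n : V, \sum_(l | src c l == n) I l = \sum_(l | dst c l == n) I l) /\
  (forall l : L,
     match elem c l with
     | VSource e => phi (src c l) - phi (dst c l) = e
     | Resistor r => phi (src c l) - phi (dst c l) = I l * r
     | Capacitor => I l = 0
     | Inductor => phi (src c l) - phi (dst c l) = 0
     end).

Definition loss (R : realType) (V L : finType) (c : circuit R V L) (I : L -> R) : R :=
  \sum_(l : L) match elem c l with
               | Resistor r => I l ^+ 2 * r
               | _ => 0
               end.

(* The circuit C^+ : C with one new link (indexed by None) carrying a resistor
   of resistance r between nodes u and v. *)
Definition add_link (R : Type) (V L : finType) (c : circuit R V L) (u v : V) (r : R)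
  : circuit R V (option L) :=
  {| src := fun l => if l is Some l' then src c l' else u;
     dst := fun l => if l is Some l' then dst c l' else v;
     elem := fun l => if l is Some l' then elem c l' else Resistor r |}.

From HB Require Import structures.
From mathcomp Require Import all_boot all_order all_algebra.
From mathcomp Require Import reals.
From mathcomp Require Import ring.
Set Implicit Arguments. Unset Strict Implicit. Unset Printing Implicit Defensive.
Import Order.TTheory GRing.Theory Num.Theory.
Local Open Scope ring_scope.

(* By Tellegen's theorem the currents I of C, which satisfy KCL, are orthogonal
   to the branch voltages of the potential difference phi' - phi.  So adding
   2 I (w' - w) on every old link leaves the loss of C unchanged, where w, w'
   are the branch voltages in C and C^+.  On a resistor this gives
   r i^2 + 2 i (r i' - r i) <= r i'^2, as the difference is r (i' - i)^2;
   on sources and inductors w' - w = 0, and capacitors carry no current.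
   The new link only adds the nonnegative loss I'(new)^2 r. *)

Lemma big_option (R : Type) (idx : R) (op : Monoid.com_law idx)
    (T : finType) (F : option T -> R) :
  \big[op/idx]_(x : option T) F x = op (F None) (\big[op/idx]_(x : T) F (Some x)).
Proof.
rewrite (bigD1 None) //=; congr (op _ _).
rewrite (reindex_omap Some id) //=; last by case.
by apply: eq_bigl => x; rewrite eqxx.
Qed.

Lemma tellegen (R : comPzRingType) (V L : finType) (s t : L -> V)
    (I : L -> R) (d : V -> R) :
  (forall n : V, \sum_(l | s l == n) I l = \sum_(l | t l == n) I l) ->
  \sum_l I l * (d (s l) - d (t l)) = 0.
Proof.
move=> kcl.
have by_node (f : L -> V) :
    \sum_l I l * d (f l) = \sum_n d n * \sum_(l | f l == n) I l.
  rewrite (partition_big f predT) //=; apply: eq_bigr => n _.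
  by rewrite big_distrr; apply: eq_bigr => l /eqP <-; rewrite mulrC.
under eq_bigr do rewrite mulrBr.
by rewrite sumrB !by_node; under eq_bigr do rewrite kcl; rewrite subrr.
Qed.

Section BranchLoss.

Variable R : realDomainType.

Definition branch_law (x : element R) (w i : R) : Prop :=
  match x with
  | VSource e => w = e
  | Resistor r => w = i * r
  | Capacitor => i = 0
  | Inductor => w = 0
  end.

Definition branch_loss (x : element R) (i : R) : R :=
  if x is Resistor r then i ^+ 2 * r else 0.

Lemma branch_loss_quadratic_bound (x : element R) (w i w' i' : R) :
    (forall r, x = Resistor r -> 0 <= r) ->
    branch_law x w i -> branch_law x w' i' ->
  branch_loss x i + 2 * (i * (w' - w)) <= branch_loss x i'.
Proof.
case: x => [e|r||] /= r_ge0.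
- by move=> -> ->; rewrite subrr !mulr0 addr0.
- move=> -> ->; rewrite -subr_ge0.
  have -> : i' ^+ 2 * r - (i ^+ 2 * r + 2 * (i * (i' * r - i * r)))
      = (i' - i) ^+ 2 * r by ring.
  by rewrite mulr_ge0 ?sqr_ge0 ?r_ge0.
- by move=> -> _; rewrite mul0r mulr0 addr0.
- by move=> -> ->; rewrite subrr !mulr0 addr0.
Qed.

End BranchLoss.

Lemma steady_state_branch_law (R : realType) (V L : finType)
    (c : circuit R V L) (phi : V -> R) (I : L -> R) (l : L) :
  steady_state c phi I ->
  branch_law (elem c l) (phi (src c l) - phi (dst c l)) (I l).
Proof. by case=> _ /(_ l). Qed.

Lemma loss_branch_loss (R : realType) (V L : finType) (c : circuit R V L)
    (I : L -> R) :
  loss c I = \sum_l branch_loss (elem c l) (I l).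
Proof. by []. Qed.

Lemma loss_add_link (R : realType) (V L : finType) (c : circuit R V L)
    (u v : V) (r : R) (I : option L -> R) :
  loss (add_link c u v r) I = I None ^+ 2 * r + loss c (fun l => I (Some l)).
Proof. by rewrite /loss big_option. Qed.

Theorem proposition5 (R : realType) (V L : finType) (c : circuit R V L)
    (u v : V) (r : R) (phi : V -> R) (I : L -> R)
    (phi' : V -> R) (I' : option L -> R) :
  pos_resistances c -> 0 < r -> u != v ->
  steady_state c phi I ->
  steady_state (add_link c u v r) phi' I' ->
  loss c I <= loss (add_link c u v r) I'.
Proof.
move=> pos_c r_gt0 _ ss ss'.
have nonneg l r' : elem c l = Resistor r' -> 0 <= r' by move/pos_c/ltW.
set d := fun n => phi' n - phi n.
have orth : \sum_l I l * (d (src c l) - d (dst c l)) = 0.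
  by apply: tellegen; case: ss.
rewrite loss_add_link !loss_branch_loss.
have -> : \sum_l branch_loss (elem c l) (I l) =
    \sum_l (branch_loss (elem c l) (I l) + 2 * (I l * (d (src c l) - d (dst c l)))).
  by rewrite big_split /= -mulr_sumr orth mulr0 addr0.
apply: le_trans (_ : _ <= \sum_l branch_loss (elem c l) (I' (Some l))) _; last first.
  by rewrite lerDr mulr_ge0 ?sqr_ge0 ?ltW.
apply: ler_sum => l _.
have law : branch_law (elem c l) (phi (src c l) - phi (dst c l)) (I l).
  exact: steady_state_branch_law ss.
have law' : branch_law (elem c l) (phi' (src c l) - phi' (dst c l)) (I' (Some l)).
  exact: steady_state_branch_law (Some l) ss'.
have -> : d (src c l) - d (dst c l) =
    (phi' (src c l) - phi' (dst c l)) - (phi (src c l) - phi (dst c l)).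
  by rewrite /d; ring.
exact: (branch_loss_quadratic_bound (R := R) (nonneg l) law law').
Qed.
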